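(* Let $G$ be a gradual mechanism implementing an SCF $f$. Then $G$ is incentive compatible if and only if for every agent $i\in N$ and all type profiles $\theta^1,\theta^2\in\Theta$ that are both consistent with a common strategy profile $s_{-i}\in S_{-i}$, we have $f(\theta^1)\,R(\theta^1_i)\,f(\theta^2)$.
   Context: Setting. $N$ is a finite set of agents and $X$ a finite set of outcomes. Each agent $i\in N$ has a finite type space $\Theta_i$; each type $\theta_i$ determines a complete and transitive preference $R(\theta_i)$ on $X$. $\Theta=\prod_{i\in N}\Theta_i$. An SCF is a map $f:\Theta\to X$. Dynamic game forms. A dynamic game form with perfect recall consists of a finite tree $\bar H$ of histories (finite sequences of action profiles) containing the empty initial history $\varnothing$, closed under prefixes ($\preceq$ prefix order); terminal histories $Z$, non-terminal $H$; at each $h\in H$ a nonempty set $\mathbb P(h)$ of agents move simultaneously with available actions $A_i(h)$, all action profiles leading to successors; $\mathbb P(\varnothing)=N$; each agent's set $H_i$ of decision nodes is partitioned into information sets $\boldsymbol H_i$, with available actions constant on information sets and perfect recall; $\mathcal X:Z\to X$ the outcome function. A strategy $s_i$ chooses an available action at each information set of $i$; $S_i$ is the set of strategies and for $M\subseteq N$, $s_M$ is a profile of strategies of the agents in $M$ ($s_{-i}$ for $M=N\setminus\{i\}$). A complete profile $s$ determines a terminal history $z(s)$ and $\mathcal X(s)=\mathcal X(z(s))$. Gradual mechanisms. A GM implementing $f$ is such a game form in which (1) actions of $i$ are nonempty subsets of $\Theta_i$; (2) at every $h\in H_i$ the available actions of $i$ are pairwise disjoint with union $\Theta_i(h)$,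 where for any history $h$, $\Theta_i(h)$ is the last action of $i$ in $h$ ($\Theta_i$ if $i$ has not acted); (3) $\mathcal X(z)=f(\theta)$ for all $z\in Z$, $\theta\in\Theta(z)=\prod_i\Theta_i(z)$. The sets $\Theta(z)$, $z\in Z$, partition $\Theta$. Consistency. For $M\subsetneq N$ and $s_M$, a history $h$ is consistent with $s_M$ if $h\preceq z(s_M,s_{N\setminus M})$ for some $s_{N\setminus M}$; a type profile $\theta$ is consistent with $s_M$ if the unique $z\in Z$ with $\theta\in\Theta(z)$ is consistent with $s_M$. Incentive compatibility. A strategy $s_i$ is unconditional for type $\theta_i$ if $\theta_i\in s_i(h)$ for every $h\in H_i$ with $\theta_i\in\Theta_i(h)$; denote such a strategy $s_{\theta_i}$. The GM is incentive compatible if $\mathcal X(s_{\theta_i},s_{-i})\,R(\theta_i)\,\mathcal X(s_i,s_{-i})$ for all $i$, $\theta_i$, unconditional $s_{\theta_i}$ for $\theta_i$, $s_i\in S_i$, $s_{-i}\in S_{-i}$. *)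

From mathcomp Require Import all_boot.
Set Implicit Arguments.
Unset Strict Implicit.
Unset Printing Implicit Defensive.

Section GM.
Variables (N : finType) (Theta : N -> finType) (X : finType).

(* an action profile: agent j's action (a nonempty subset of Theta j) if j
   moves, None if j does not move at that node *)
Definition Prof := {dffun forall j : N, option {set Theta j}}.
Definition history := seq Prof.

(* Theta_j(h): the last action of j in h, or all of Theta_j *)
Definition lastAct (j : N) (h : history) : {set Theta j} :=
  foldl (fun acc (a : Prof) => if a j is Some x then x else acc) setT h.

Record gameForm := GameForm {
  Hbar   : seq history;                                  (* finite tree *)
  movers : history -> {set N};
  acts   : forall j : N, history -> {set {set Theta j}};
  iset   : forall j : N, history -> nat;                 (* label of j's information set *)
  outc   : history -> X                                  (* outcome function on Z *)
}.

Variable G : gameForm.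

Definition inTree (h : history) := h \in Hbar G.
Definition nonterminal (h : history) := [exists a : Prof, rcons h a \in Hbar G].
Definition terminal (h : history) := inTree h /\ ~~ nonterminal h.
Definition decnode (j : N) (h : history) := [/\ inTree h, nonterminal h & j \in movers G h].

Definition legalProf (h : history) (a : Prof) :=
  forall j : N, (j \in movers G h -> exists2 x, a j = Some x & x \in acts G j h)
             /\ (j \notin movers G h -> a j = None).

Fixpoint expAux (j : N) (pre h : history) : seq (nat * option {set Theta j}) :=
  match h with
  | [::] => [::]
  | a :: t => (if j \in movers G pre then [:: (iset G j pre, a j)] else [::])
              ++ expAux j (rcons pre a) t
  end.
Definition experience (j : N) (h : history) := expAux j [::] h.

(* information sets: available actions constant on them, perfect recall *)
Definition infoSetsOK :=
  (forall j h h', decnode j h -> decnode j h' -> iset G j h = iset G j h' ->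
         acts G j h = acts G j h') /\
  (forall j h h', decnode j h -> decnode j h' -> iset G j h = iset G j h' ->
         experience j h = experience j h').

Definition is_gameForm :=
  [/\
      inTree [::],
      (forall h a, inTree (rcons h a) -> inTree h),
      (forall h, inTree h -> nonterminal h ->
         [/\ movers G h != set0,
             (forall j, j \in movers G h -> acts G j h != set0) &
             (forall a, inTree (rcons h a) <-> legalProf h a)]),
      movers G [::] = setT &
      infoSetsOK].


Definition is_GM (f : (forall j, Theta j) -> X) :=
  [/\ is_gameForm,
      (forall j h, decnode j h ->
         [/\ set0 \notin acts G j h,
             (forall A B, A \in acts G j h -> B \in acts G j h -> A != B ->
                [disjoint A & B]) &
             \bigcup_(A in acts G j h) A = lastAct j h]) &
      (forall z (th : forall j, Theta j), terminal z ->
         (forall j, th j \in lastAct j z) -> outc G z = f th)].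

(* strategies: a choice of action for every information set (label) *)
Definition strategy (j : N) := nat -> {set Theta j}.
Definition stratProfile := forall j : N, strategy j.

Definition validStrat (j : N) (s : strategy j) :=
  forall h, decnode j h -> s (iset G j h) \in acts G j h.

Definition unconditional (j : N) (thj : Theta j) (s : strategy j) :=
  validStrat s /\
  (forall h, decnode j h -> thj \in lastAct j h -> thj \in s (iset G j h)).

Definition profAt (s : stratProfile) (h : history) : Prof :=
  [ffun j => if j \in movers G h then Some (s j (iset G j h)) else None].

Definition plays (s : stratProfile) (z : history) :=
  terminal z /\ (forall h a, prefix (rcons h a) z -> a = profAt s h).

Definition upd (s : stratProfile) (i : N) (si : strategy i) : stratProfile :=
  dfwith s si.

Definition validOthers (i : N) (s : stratProfile) :=
  forall j, j != i -> validStrat (s j).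

Definition incentive_compatible
    (R : forall j : N, Theta j -> rel X) :=
  forall (i : N) (thi : Theta i) (sth si : strategy i) (s : stratProfile),
    unconditional thi sth -> validStrat si -> validOthers i s ->
    forall z1 z2, plays (upd s sth) z1 -> plays (upd s si) z2 ->
    R i thi (outc G z1) (outc G z2).

(* type profile th is consistent with s_{-i} (the components of s other
   than i; the i-th component of s is ignored) *)
Definition consistent (i : N) (s : stratProfile) (th : forall j, Theta j) :=
  exists z, [/\ terminal z, (forall j, th j \in lastAct j z) &
    exists2 si : strategy i, validStrat si &
      exists2 z', plays (upd s si) z' & prefix z z'].

End GM.

Definition is_preference (X : finType) (R : rel X) :=
  (forall x y, R x y || R y x) /\ (forall x y z, R x y -> R y z -> R x z).

From mathcomp Require Import all_boot.
Set Implicit Arguments.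
Unset Strict Implicit.
Unset Printing Implicit Defensive.

(* Actions of a gradual mechanism refine the agents' current type sets, so
   Theta_j(h) shrinks along every history and f equals outc z on the cell
   Theta(z) of a terminal history z.  If th_i reaches z against s_{-i} with
   some strategy s_i, then th_i lies in every action s_i takes along z;
   replacing each action of s_i that misses th_i by an available action
   containing th_i (when there is one) yields an unconditional strategy for
   th_i that still reaches z.  Conversely an unconditional strategy keeps th_i
   in Theta_i(z).  So comparing the play of an unconditional strategy with a
   deviation against s_{-i} is the same as comparing f at two type profiles
   consistent with s_{-i}. *)

Lemma prefix_rconsP (T : eqType) (p s : seq T) x :
  prefix p (rcons s x) -> p = rcons s x \/ prefix p s.
Proof.
move/prefixP=> [t]; elim/last_ind: t => [|t y _]; first by rewrite cats0; left.
by rewrite -rcons_cat => /rcons_inj [-> _]; right; apply: prefix_prefix.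
Qed.

Section GameForm.
Variables (N : finType) (Theta : N -> finType) (X : finType).
Variable G : gameForm Theta X.

Lemma lastAct_rcons j (h : history Theta) (a : Prof Theta) :
  lastAct j (rcons h a) = if a j is Some x then x else lastAct j h.
Proof. by rewrite /lastAct foldl_rcons. Qed.

Lemma profAt_upd s i (si : strategy Theta i) h :
  profAt G (upd s si) h i = if i \in movers G h then Some (si (iset G i h)) else None.
Proof. by rewrite /profAt ffunE /upd dfwith_in. Qed.

Hypothesis gf : is_gameForm G.

Lemma inTree_prefix z p : inTree G z -> prefix p z -> inTree G p.
Proof.
have [_ inTree_rcons _ _ _] := gf.
elim/last_ind: z => [|z x IHz] zT; first by rewrite prefixs0 => /eqP ->.
by case/prefix_rconsP => [-> // | /IHz]; apply; apply: inTree_rcons zT.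
Qed.

Lemma inTree_rcons h a : inTree G (rcons h a) ->
  [/\ inTree G h, nonterminal G h & legalProf G h a].
Proof.
have [_ inTree_rcons successors _ _] := gf; move=> haT.
have hT := inTree_rcons _ _ haT.
have hN : nonterminal G h by apply/existsP; exists a.
have [_ _ /(_ a) [legal _]] := successors h hT hN; split=> //; exact: legal.
Qed.

Lemma terminal_maximal z z' : terminal G z -> inTree G z' -> prefix z z' -> z = z'.
Proof.
case=> _ /existsPn zN z'T /prefixP [[|y t] z'E]; first by rewrite z'E cats0.
have := zN y; rewrite [_ \in _](inTree_prefix z'T) // z'E -cat_rcons.
exact: prefix_prefix.
Qed.

End GameForm.

Section GradualMechanism.
Variables (N : finType) (Theta : N -> finType) (X : finType).
Variables (G : gameForm Theta X) (f : (forall j, Theta j) -> X).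
Hypothesis gm : is_GM G f.

Let gf : is_gameForm G. Proof. by case: gm. Qed.

Lemma outc_GM z th : terminal G z -> (forall j, th j \in lastAct j z) -> outc G z = f th.
Proof. by case: gm => _ _; apply. Qed.

Lemma GM_acts j h : decnode G j h ->
  set0 \notin acts G j h /\ \bigcup_(A in acts G j h) A = lastAct j h.
Proof. by case: gm => _ acts_partition _ /acts_partition []. Qed.

Lemma lastAct_rcons_subset j h a :
  inTree G (rcons h a) -> lastAct j (rcons h a) \subset lastAct j h.
Proof.
case/(inTree_rcons gf) => hT hN /(_ j) [legal_mover legal_idle].
rewrite lastAct_rcons; have [jm | jNm] := boolP (j \in movers G h); last first.
  by rewrite legal_idle.
have [x -> xA] := legal_mover jm; have [_ <-] := GM_acts (And3 hT hN jm).
exact: bigcup_sup xA.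
Qed.

Lemma lastAct_prefix_subset j z p :
  inTree G z -> prefix p z -> lastAct j z \subset lastAct j p.
Proof.
elim/last_ind: z => [|z x IHz] zT; first by rewrite prefixs0 => /eqP ->.
case/prefix_rconsP => [-> // | pz].
apply: subset_trans (lastAct_rcons_subset j zT) (IHz _ pz).
by case: (inTree_rcons gf zT).
Qed.

(* Every agent moves at the root, so past the root Theta_j(z) is a chosen,
   hence nonempty, action. *)
Lemma lastAct_neq0 j z : inTree G z -> z != [::] -> lastAct j z != set0.
Proof.
elim/last_ind: z => [// | z x IHz] zxT _.
case/(inTree_rcons gf): (zxT) => zT zN /(_ j) [legal_mover legal_idle].
rewrite lastAct_rcons; have [jm | jNm] := boolP (j \in movers G z).
  have [y -> yA] := legal_mover jm; have [A0 _] := GM_acts (And3 zT zN jm).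
  by apply: contraNneq A0 => <-.
rewrite legal_idle //; apply: IHz => //; apply: contraNneq jNm => ->.
by case: gf => _ _ _ -> _; rewrite inE.
Qed.

Lemma plays_lastAct_subset s i (si : strategy Theta i) z h a :
  plays G (upd s si) z -> prefix (rcons h a) z -> i \in movers G h ->
  lastAct i z \subset si (iset G i h).
Proof.
move=> [[zT _] play] haz im; move: (lastAct_prefix_subset i zT haz).
by rewrite lastAct_rcons (play _ _ haz) profAt_upd im.
Qed.

Lemma plays_unconditional_lastAct s i (thi : Theta i) sth z p :
  unconditional G thi sth -> plays G (upd s sth) z -> prefix p z ->
  thi \in lastAct i p.
Proof.
move=> [_ uncond] [[zT _] play]; elim/last_ind: p => [|p a IHp] paz.
  by rewrite /lastAct /= inE.
have pz : prefix p z by apply: prefix_trans (prefix_rcons p a) paz.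
rewrite lastAct_rcons (play _ _ paz) profAt_upd; case: ifP => im; last exact: IHp.
have [pT pN _] := inTree_rcons gf (inTree_prefix gf zT paz).
by apply: uncond; [split | apply: IHp].
Qed.

Lemma plays_consistent i s (si : strategy Theta i) z th :
  validStrat G si -> plays G (upd s si) z -> (forall j, th j \in lastAct j z) ->
  consistent G i s th.
Proof.
move=> vsi play thz; exists z; split => //; first by case: play.
by exists si => //; exists z => //; apply: prefix_refl.
Qed.

Lemma plays_upd_eq s i (si sth : strategy Theta i) z :
  plays G (upd s si) z ->
  (forall h a, prefix (rcons h a) z -> i \in movers G h ->
     sth (iset G i h) = si (iset G i h)) ->
  plays G (upd s sth) z.
Proof.
move=> [zT play] agree; split => // h a haz; rewrite (play _ _ haz).
apply/ffunP => j; rewrite !ffunE; case: ifP => // jm; congr Some.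
rewrite /upd; have [ij | ij] := eqVneq i j; last by rewrite !dfwith_out.
by subst j; rewrite !dfwith_in (agree _ _ haz jm).
Qed.

Section Patch.
Variables (i : N) (thi : Theta i) (si : strategy Theta i).
Hypothesis vsi : validStrat G si.

(* Actions are constant on information sets, so any decision node of i with
   label n tells which actions are available at n (cf. label_repP). *)
Definition label_nodes (n : nat) : seq (history Theta) :=
  [seq h <- Hbar G | [&& nonterminal G h, i \in movers G h & iset G i h == n]].

Definition label_rep (n : nat) : history Theta := head [::] (label_nodes n).

Lemma label_repP h : decnode G i h ->
  acts G i (label_rep (iset G i h)) = acts G i h.
Proof.
move=> hD; have [hT hN im] := hD; have [_ _ _ _ [acts_iset _]] := gf.
have : h \in label_nodes (iset G i h) by rewrite mem_filter hN im eqxx.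
rewrite /label_rep; case E: label_nodes => [// | h' t] _.
have : h' \in label_nodes (iset G i h) by rewrite E mem_head.
rewrite mem_filter => /andP [/and3P [h'N im' /eqP h'h] h'T].
by apply: acts_iset => //; split.
Qed.

Definition pick_action (A : {set {set Theta i}}) : {set Theta i} :=
  odflt (odflt set0 [pick B in A]) [pick B in A | thi \in B].

Lemma pick_action_in A : A != set0 -> pick_action A \in A.
Proof.
rewrite /pick_action.
case: [pick B in A | thi \in B] / pickP => [B /andP [] // | _] /=.
by move=> /set0Pn [B BA]; case: pickP => [// | noA]; have := noA B; rewrite BA.
Qed.

Lemma pick_action_mem (A : {set {set Theta i}}) B :
  B \in A -> thi \in B -> thi \in pick_action A.
Proof.
rewrite /pick_action.
case: [pick B in A | thi \in B] / pickP => [C /andP [] // | noC BA thiB].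
by have := noC B; rewrite BA thiB.
Qed.

Definition patch_strategy : strategy Theta i := fun n =>
  if thi \in si n then si n else pick_action (acts G i (label_rep n)).

Lemma patch_strategyE n : thi \in si n -> patch_strategy n = si n.
Proof. by rewrite /patch_strategy => ->. Qed.

Lemma patch_strategy_unconditional : unconditional G thi patch_strategy.
Proof.
split=> [h hD | h hD thi_h]; rewrite /patch_strategy; case: ifP => // _;
  rewrite ?vsi // label_repP //.
- have [hT hN im] := hD; have [_ _ successors _ _] := gf.
  by have [_ acts_neq0 _] := successors h hT hN; apply/pick_action_in/acts_neq0.
- have [_ acts_cover] := GM_acts hD.
  by move: thi_h; rewrite -acts_cover => /bigcupP [B]; apply: pick_action_mem.
Qed.

End Patch.

Lemma lastAct_profile z : inTree G z -> z != [::] ->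
  exists th : forall j, Theta j, forall j, th j \in lastAct j z.
Proof.
move=> zT zN; exists (fun j => xchoose (set0Pn _ (lastAct_neq0 j zT zN))) => j.
exact: xchooseP.
Qed.

Lemma incentive_compatible_consistent (R : forall j, Theta j -> rel X) :
  incentive_compatible G R ->
  forall i s, validOthers G i s -> forall th1 th2,
    consistent G i s th1 -> consistent G i s th2 -> R i (th1 i) (f th1) (f th2).
Proof.
move=> IC i s vo th1 th2.
move=> [z1 [t1 m1 [si1 v1 [z1' p1 pr1]]]] [z2 [t2 m2 [si2 v2 [z2' p2 pr2]]]].
have z1E := terminal_maximal gf t1 p1.1.1 pr1.
have z2E := terminal_maximal gf t2 p2.1.1 pr2; subst z1' z2'.
rewrite -(outc_GM t1 m1) -(outc_GM t2 m2).
have p1' : plays G (upd s (patch_strategy (th1 i) si1)) z1.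
  apply: (plays_upd_eq p1) => h a haz im; apply: patch_strategyE.
  exact: (subsetP (plays_lastAct_subset p1 haz im)) _ (m1 i).
exact: IC (patch_strategy_unconditional (th1 i) v1) v2 vo _ _ p1' p2.
Qed.

Lemma consistent_incentive_compatible (R : forall j, Theta j -> rel X) :
  (forall j (thj : Theta j), is_preference (R j thj)) ->
  (forall i s, validOthers G i s -> forall th1 th2,
    consistent G i s th1 -> consistent G i s th2 -> R i (th1 i) (f th1) (f th2)) ->
  incentive_compatible G R.
Proof.
move=> pref C i thi sth si s uncond vsi vo z1 z2 p1 p2.
have [root_node | root_leaf] := boolP (nonterminal G [::]); last first.
  have root_z z : terminal G z -> [::] = z.
    have [root_inTree _ _ _ _] := gf; move=> [zT _].
    exact: (terminal_maximal gf (conj root_inTree root_leaf) zT (prefix0s z)).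
  rewrite -(root_z _ p1.1) -(root_z _ p2.1).
  have [total _] := pref i thi.
  by case/orP: (total (outc G [::]) (outc G [::])).
have neq_nil z : terminal G z -> z != [::].
  by move=> [_ zN]; apply: contraNneq zN => ->.
have [th1 m1] := lastAct_profile p1.1.1 (neq_nil _ p1.1).
have [th2 m2] := lastAct_profile p2.1.1 (neq_nil _ p2.1).
pose th1' := dfwith th1 thi.
have m1' j : th1' j \in lastAct j z1.
  rewrite /th1'; case: dfwithP => [| k _]; last exact: m1.
  exact: (plays_unconditional_lastAct uncond p1 (prefix_refl z1)).
have := C i s vo th1' th2
  (plays_consistent uncond.1 p1 m1') (plays_consistent vsi p2 m2).
by rewrite /th1' dfwith_in -(outc_GM p1.1 m1') -(outc_GM p2.1 m2).
Qed.

End GradualMechanism.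

Theorem proposition4 (N : finType) (Theta : N -> finType) (X : finType)
    (R : forall j : N, Theta j -> rel X)
    (f : (forall j, Theta j) -> X) (G : gameForm Theta X) :
  (forall j (thj : Theta j), is_preference (R j thj)) ->
  is_GM G f ->
  incentive_compatible G R <->
  (forall (i : N) (s : stratProfile Theta), validOthers G i s ->
     forall th1 th2 : forall j, Theta j,
       consistent G i s th1 -> consistent G i s th2 ->
       R i (th1 i) (f th1) (f th2)).
Proof.
move=> pref gm; split.
  exact: incentive_compatible_consistent.
exact: consistent_incentive_compatible.
Qed.
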